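(* Let $\mathcal{T}$ be a conforming triangulation of a polygonal domain $\Omega\subset\mathbb{R}^2$ satisfying the mesh regularity condition of the context, with $P_1$ space $\mathcal V$, and let $b$ satisfy the standing assumptions (S). Let $w,u\in\mathcal V$ and $z(t)\in\mathcal V$ for $0\le t\le1$, let $v$ be the test function associated with $w$, and let $T\in\mathcal T_c$ have vertices $a_i,a_j,a_k$ ordered so that $w(a_i)\ge w(a_j)\ge w(a_k)$, with $w(a_k)\le0$. Then $$\int_T\int_0^1\frac{\partial b}{\partial\eta}(x,z(t))\,w\,v\,dx\,dt\ge-\delta_T(w)\,\frac{7B_\eta|T|}{6},$$ where $|T|$ is the area of $T$.
   Context: Setting: $\Omega\subset\mathbb{R}^2$ polygonal, $\partial\Omega=\Gamma_D\cup\Gamma_N$ with $\Gamma_D$ of positive measure; $\mathcal{T}$ a conforming triangulation resolving $\Gamma_D,\Gamma_N$; $\mathcal{D}$ the set of vertices of $\mathcal T$ not on $\Gamma_D$; $\mathcal{V}$ the continuous piecewise linear functions on $\mathcal T$ vanishing on $\Gamma_D$. Mesh regularity: there are $0<t_{min}\le t_{max}<\pi/2$ with every interior angle of every $T\in\mathcal T$ in $[t_{min},t_{max}]$. For $\phi\in\mathcal V$, $\delta_T(\phi):=\max_{i,j\in\{1,2,3\}}|\phi(a_i)-\phi(a_j)|$ over the vertices of $T$. Test function: for $w\in\mathcal V$, $v\in\mathcal V$ is defined by $v(a)=1$ if $w(a)>0$ and $v(a)=0$ if $w(a)\le0$, for $a\in\mathcal D$. $\mathcal{T}_c$ is the set of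 $T\in\mathcal T$ on which $v$ is neither identically $1$ nor identically $0$. (S) $a(x,\eta,\xi)=A(x,\eta,\xi)\xi$ with $A:\Omega\times\mathbb R\times\mathbb R^2\to\mathbb R$; $a$ and $b(x,\eta)$ Carathéodory, $C^1$ in $(\eta,\xi)$ (resp. $\eta$) for a.e. $x$, measurable in $x$; there are $\gamma_a>0,K_\eta>0,B_\eta\ge0$ with, for a.e. $x$ and all $\eta,\xi,\zeta$: $\sum_{i,j}\frac{\partial a_i}{\partial\xi_j}(x,\eta,\xi)\zeta_i\zeta_j\ge\gamma_a|\zeta|^2$, $|\partial A/\partial\eta|\le K_\eta$, $0\le\partial b/\partial\eta\le B_\eta$. *)

From HB Require Import structures.
From mathcomp Require Import all_boot all_order all_algebra.
From mathcomp Require Import all_classical all_reals all_analysis.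
Set Implicit Arguments. Unset Strict Implicit. Unset Printing Implicit Defensive.
Import Order.TTheory GRing.Theory Num.Theory.
Import numFieldNormedType.Exports.
Local Open Scope classical_set_scope.
Local Open Scope ring_scope.

Section Defs.
Variable R : realType.

Definition pt := (R * R)%type.
Definition tri := (pt * pt * pt)%type.
Definition tv1 (T : tri) : pt := T.1.1.
Definition tv2 (T : tri) : pt := T.1.2.
Definition tv3 (T : tri) : pt := T.2.
Definition tverts (T : tri) : seq pt := [:: tv1 T; tv2 T; tv3 T].

Definition leb2 := (@lebesgue_measure R \x @lebesgue_measure R)%E.

Definition det2 (a b c : pt) : R :=
  (b.1 - a.1) * (c.2 - a.2) - (b.2 - a.2) * (c.1 - a.1).

Definition nondegenerate (T : tri) := det2 (tv1 T) (tv2 T) (tv3 T) != 0.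

Definition hull (T : tri) : set pt :=
  [set x | exists l1 l2 l3 : R, [/\ 0 <= l1, 0 <= l2, 0 <= l3, l1 + l2 + l3 = 1 &
     x.1 = l1 * (tv1 T).1 + l2 * (tv2 T).1 + l3 * (tv3 T).1 /\
     x.2 = l1 * (tv1 T).2 + l2 * (tv2 T).2 + l3 * (tv3 T).2]].

Definition segment (a b : pt) : set pt :=
  [set x | exists l : R, [/\ 0 <= l, l <= 1,
     x.1 = (1 - l) * a.1 + l * b.1 & x.2 = (1 - l) * a.2 + l * b.2]].

Definition area (T : tri) : R := fine (leb2 (hull T)).

Definition angle (a b c : pt) : R :=
  acos (((b.1 - a.1) * (c.1 - a.1) + (b.2 - a.2) * (c.2 - a.2)) /
        (Num.sqrt ((b.1 - a.1) ^+ 2 + (b.2 - a.2) ^+ 2) *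
         Num.sqrt ((c.1 - a.1) ^+ 2 + (c.2 - a.2) ^+ 2))).

Definition angles_in (tmin tmax : R) (T : tri) :=
  let: (a, b, c) := (tv1 T, tv2 T, tv3 T) in
  [/\ tmin <= angle a b c <= tmax, tmin <= angle b c a <= tmax
    & tmin <= angle c a b <= tmax].

Definition mesh_union (M : seq tri) : set pt := \bigcup_(T in [set T | T \in M]) hull T.

Definition conforming (M : seq tri) :=
  (forall T, T \in M -> nondegenerate T) /\ uniq M /\
  forall T T', T \in M -> T' \in M -> T != T' ->
    hull T `&` hull T' = set0 \/
    (exists a, [/\ a \in tverts T, a \in tverts T' & hull T `&` hull T' = [set a]]) \/
    (exists a b, [/\ a != b, [&& a \in tverts T, b \in tverts T, a \in tverts T' & b \in tverts T']
                 & hull T `&` hull T' = segment a b]).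

Definition Omega (M : seq tri) : set pt := (mesh_union M)°.

Definition bdry (A : set pt) : set pt := closure A `\` A°.

(* Gamma_D given as a nonempty list of mesh edges lying on the boundary of
   Omega (so the mesh resolves Gamma_D and Gamma_D has positive length) *)
Definition GammaD (ED : seq (pt * pt)) : set pt :=
  \bigcup_(e in [set e | e \in ED]) segment e.1 e.2.

Definition is_mesh_edge (M : seq tri) (e : pt * pt) :=
  e.1 != e.2 /\ exists T, [/\ T \in M, e.1 \in tverts T & e.2 \in tverts T].

Definition valid_dirichlet (M : seq tri) (ED : seq (pt * pt)) :=
  ED != [::] /\ (forall e, e \in ED -> is_mesh_edge M e) /\
  GammaD ED `<=` bdry (Omega M).

Definition Dnodes (M : seq tri) (ED : seq (pt * pt)) : set pt :=
  [set a | (exists T, T \in M /\ a \in tverts T) /\ ~ GammaD ED a].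

(* P1 space: continuous piecewise linear on M, vanishing on Gamma_D.
   Continuity is automatic: f is a single function that is affine on each
   closed triangle. *)
Definition P1 (M : seq tri) (ED : seq (pt * pt)) (f : pt -> R) :=
  (forall T, T \in M -> exists al be ga : R,
     forall x, hull T x -> f x = al * x.1 + be * x.2 + ga) /\
  (forall x, GammaD ED x -> f x = 0).

Definition test_fun (M : seq tri) (ED : seq (pt * pt)) (w v : pt -> R) :=
  P1 M ED v /\
  forall a, Dnodes M ED a -> v a = (if 0 < w a then 1 else 0).

Definition in_Tc (M : seq tri) (v : pt -> R) (T : tri) :=
  T \in M /\ ~ (forall x, hull T x -> v x = 1) /\ ~ (forall x, hull T x -> v x = 0).

Definition deltaT (T : tri) (f : pt -> R) : R :=
  Num.max `|f (tv1 T) - f (tv2 T)|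
    (Num.max `|f (tv2 T) - f (tv3 T)|  `|f (tv1 T) - f (tv3 T)|).

Definition assumptions_b (M : seq tri) (b : pt -> R -> R) (Beta : R) :=
  (forall eta, measurable_fun (Omega M) (fun x => b x eta)) /\
  {ae leb2, forall x, Omega M x ->
     (forall eta, derivable (b x) eta 1) /\ continuous (derive1 (b x)) /\
     (forall eta, 0 <= derive1 (b x) eta <= Beta)}.

End Defs.

From Pilot Require Import Defs.
From HB Require Import structures.
From mathcomp Require Import all_boot all_order all_algebra.
From mathcomp Require Import all_classical all_reals all_analysis.
From mathcomp Require Import ring lra.
Import Order.TTheory GRing.Theory Num.Theory.
Import numFieldNormedType.Exports.
Local Open Scope classical_set_scope.
Local Open Scope ring_scope.

(* If w is positive at some vertex,
   all vertex values of w, hence all values of w on T, are >= -delta_T(w);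
   otherwise v vanishes on T.  Since 0 <= v <= 1 this gives w v >= -delta_T(w)
   on T, so db/deta(x, z) w v >= -B delta_T(w) wherever 0 <= db/deta <= B, that
   is almost everywhere on T, because T minus Omega lies on the three lines
   through its edges.  Integrating over [0,1] x T gives the lower bound
   -delta_T(w) B |T|, which is even better than the claimed one. *)

Section integral_bounds.
Local Open Scope ereal_scope.
Context {d} {T : measurableType d} {R : realType} {mu : {measure set T -> \bar R}}.
Context {D : set T} (mD : measurable D).
Import HBNNSimple.

(* No measurability of [f] is required: the integral of a nonnegative function
   is the supremum of the integrals of the simple functions below it. *)
Lemma ge0_integral_ae_le_cst {f : T -> \bar R} {c : R} :
  (0 <= c)%R -> (forall x, D x -> 0 <= f x) ->
  {ae mu, forall x, D x -> f x <= c%:E} ->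
  \int[mu]_(x in D) f x <= c%:E * mu D.
Proof.
move=> c0 f0 fc; rewrite ge0_integralE //.
apply: ge_ereal_sup => _ [h /= hf <-].
have -> : sintegral mu h = \int[mu]_(x in D) (h x)%:E.
  rewrite integral_nnsfun //; congr sintegral; apply/funext => x.
  rewrite /patch; case: ifPn => // /negP; rewrite inE => nDx.
  apply/eqP; rewrite eq_le fun_ge0 andbT -lee_fin (le_trans (hf x)) //.
  by rewrite /patch; case: ifPn => //; rewrite inE.
rewrite -integral_cst //; apply: ae_ge0_le_integral => //.
- by move=> x _; rewrite lee_fin fun_ge0.
- apply/measurable_realfun.measurable_EFinP.
  exact: measurable_funS (measurable_funPT h).
apply: filterS fc => x fxc Dx; apply: le_trans (hf x) _.
by rewrite /patch; case: ifPn => _; [exact: fxc|].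
Qed.

Lemma integral_ae_ge_cst {f : T -> \bar R} {c : R} : (0 <= c)%R ->
  {ae mu, forall x, D x -> (- c)%:E <= f x} ->
  - (c%:E * mu D) <= \int[mu]_(x in D) f x.
Proof.
move=> c0 fc; rewrite integralE -[leLHS]add0e.
apply: leeB; first by apply: integral_ge0 => x _; exact: funepos_ge0.
apply: (ge0_integral_ae_le_cst c0); first by move=> x _; exact: funeneg_ge0.
apply: filterS fc => x fxc Dx.
by rewrite funenegE ge_max lee_fin c0 andbT leeNl -EFinN fxc.
Qed.

End integral_bounds.

Section affine_functions.
Context {R : realType}.
Implicit Types (p q r : R) (x : pt R).

Definition affine2 p q r x := p * x.1 + q * x.2 + r.

Lemma measurable_affine2 p q r : measurable_fun setT (affine2 p q r).
Proof.
by apply: measurable_realfun.measurable_funD => //;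
  apply: measurable_realfun.measurable_funD; apply: measurable_realfun.measurable_funM.
Qed.

Lemma measurable_affine2_preimage p q r (Y : set R) :
  measurable Y -> measurable (affine2 p q r @^-1` Y).
Proof. by move=> mY; rewrite -[_ @^-1` _]setTI; exact: measurable_affine2. Qed.

Lemma continuous_affine2 p q r : continuous (affine2 p q r).
Proof.
move=> x; apply: cvgD; last exact: cvg_cst.
by apply: cvgD; apply: cvgM; [exact: cvg_cst|exact: cvg_fst|exact: cvg_cst|exact: cvg_snd].
Qed.

(* A vertical line is [{x0} `*` R]; any other line has one-point sections. *)
Lemma leb2_affine2_eq0 p q r : p != 0 \/ q != 0 ->
  @leb2 R [set x | affine2 p q r x = 0] = 0%E.
Proof.
move=> pq; have [q0|q0] := eqVneq q 0.
  have p0 : p != 0 by case: pq => //; rewrite q0 eqxx.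
  have -> : [set x | affine2 p q r x = 0] = [set - r / p] `*` [set: R].
    apply/seteqP; split => [[x y]|[x y]]; rewrite /affine2 /= q0.
      by move=> h; split => //=; apply: (mulIf p0); rewrite divfK //; lra.
    by move=> [/= -> _]; rewrite [p * _]mulrC divfK //; lra.
  rewrite /leb2 (product_measure1E lebesgue_measure lebesgue_measure) //.
  by rewrite [X in (X * _)%E](_ : _ = 0%E) ?mul0e //; exact: lebesgue_measure_set1.
rewrite /leb2 /product_measure1; apply: integral0_eq => x _ /=.
have -> : xsection [set x | affine2 p q r x = 0] x = [set - (p * x + r) / q].
  apply/seteqP; split => y; rewrite /xsection /= inE /affine2 /=.
    by move=> h; apply: (mulIf q0); rewrite divfK //; lra.
  by move=> ->; rewrite [q * _]mulrC divfK //; lra.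
exact: lebesgue_measure_set1.
Qed.

Lemma negligible_affine2_eq0 p q r y1 y2 : affine2 p q r y1 != affine2 p q r y2 ->
  (@leb2 R).-negligible [set x | affine2 p q r x = 0].
Proof.
move=> y12; apply/negligibleP; last apply: leb2_affine2_eq0.
  rewrite -[X in measurable X]/(affine2 p q r @^-1` [set 0]).
  exact: measurable_affine2_preimage.
have [p0|] := eqVneq p 0; last by left.
have [q0|] := eqVneq q 0; last by right.
by move: y12; rewrite /affine2 p0 q0 !mul0r !add0r eqxx.
Qed.

End affine_functions.

Section barycentric_coordinates.
Context {R : realType}.
Implicit Types a b c x : pt R.

Definition bary a b c x := det2 x b c / det2 a b c.

Lemma det2_rotate a b c : det2 b c a = det2 a b c.
Proof. by rewrite /det2; ring. Qed.

Lemma bary_affine2 a b c : bary a b c =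
  affine2 ((b.2 - c.2) / det2 a b c) ((c.1 - b.1) / det2 a b c)
          ((b.1 * c.2 - b.2 * c.1) / det2 a b c).
Proof. by apply/funext => x; rewrite /bary /affine2 /det2; ring. Qed.

Lemma bary_self a b c : det2 a b c != 0 -> bary a b c a = 1.
Proof. exact: divff. Qed.

Lemma bary_next a b c : bary a b c b = 0.
Proof. by rewrite /bary /det2 !subrr !mul0r subrr mul0r. Qed.

Lemma bary_comb1 a b c x l1 l2 l3 : det2 a b c != 0 -> l1 + l2 + l3 = 1 ->
  x.1 = l1 * a.1 + l2 * b.1 + l3 * c.1 -> x.2 = l1 * a.2 + l2 * b.2 + l3 * c.2 ->
  bary a b c x = l1.
Proof.
move=> abc l1E x1 x2; apply: (mulIf abc); rewrite divfK // /det2 x1 x2.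
by rewrite (_ : l1 = 1 - l2 - l3); [ring | lra].
Qed.

Lemma bary_comb a b c x l1 l2 l3 : det2 a b c != 0 -> l1 + l2 + l3 = 1 ->
  x.1 = l1 * a.1 + l2 * b.1 + l3 * c.1 -> x.2 = l1 * a.2 + l2 * b.2 + l3 * c.2 ->
  [/\ bary a b c x = l1, bary b c a x = l2 & bary c a b x = l3].
Proof.
move=> abc l1E x1 x2; split; first exact: bary_comb1 abc l1E x1 x2.
  apply: (bary_comb1 _ _ _ _ _ l3 l1); first by rewrite det2_rotate.
  - by lra.
  - by rewrite x1; ring.
  - by rewrite x2; ring.
apply: (bary_comb1 _ _ _ _ _ l1 l2); first by rewrite 2!det2_rotate.
- by lra.
- by rewrite x1; ring.
- by rewrite x2; ring.
Qed.

Lemma bary_decomp a b c x : det2 a b c != 0 ->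
  [/\ bary a b c x + bary b c a x + bary c a b x = 1,
      x.1 = bary a b c x * a.1 + bary b c a x * b.1 + bary c a b x * c.1
    & x.2 = bary a b c x * a.2 + bary b c a x * b.2 + bary c a b x * c.2].
Proof.
rewrite /bary (det2_rotate b c a) (det2_rotate a b c) /det2 => abc.
by split; field.
Qed.

Lemma measurable_bary_ge0 a b c : measurable [set x | 0 <= bary a b c x].
Proof.
have -> : [set x | 0 <= bary a b c x] = bary a b c @^-1` [set` `[0, +oo[%R].
  by apply/seteqP; split => x; rewrite /= in_itv /= andbT.
by rewrite bary_affine2; apply: measurable_affine2_preimage; exact: measurable_itv.
Qed.

Lemma open_bary_gt0 a b c : open [set x | 0 < bary a b c x].
Proof.
rewrite -[X in open X]/(bary a b c @^-1` [set y | 0 < y]) bary_affine2.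
by apply: open_comp; [move=> x _; exact: continuous_affine2 | exact: open_gt].
Qed.

Lemma negligible_bary_eq0 a b c : det2 a b c != 0 ->
  (@leb2 R).-negligible [set x | bary a b c x = 0].
Proof.
move=> abc; rewrite bary_affine2; apply: (@negligible_affine2_eq0 _ _ _ _ a b).
by rewrite -bary_affine2 bary_self // bary_next oner_neq0.
Qed.

End barycentric_coordinates.
Arguments bary_comb {R a b c x l1 l2 l3}.
Arguments bary_decomp {R a b c} x.
Arguments negligible_bary_eq0 {R a b c}.

Section triangles.
Context {R : realType}.
Implicit Types (T : tri R) (x : pt R).

Definition bary1 T := bary (tv1 T) (tv2 T) (tv3 T).
Definition bary2 T := bary (tv2 T) (tv3 T) (tv1 T).
Definition bary3 T := bary (tv3 T) (tv1 T) (tv2 T).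

Lemma hull_bary {T} x : Defs.nondegenerate T ->
  hull T x <-> [/\ 0 <= bary1 T x, 0 <= bary2 T x & 0 <= bary3 T x].
Proof.
move=> nT; split => [[l1 [l2 [l3 [l10 l20 l30 l1E [x1 x2]]]]] | [b1 b2 b3]].
  by rewrite /bary1 /bary2 /bary3; have [-> -> ->] := bary_comb nT l1E x1 x2.
have [bE x1 x2] := bary_decomp x nT.
by exists (bary1 T x), (bary2 T x), (bary3 T x).
Qed.

Lemma hull_tv T : [/\ hull T (tv1 T), hull T (tv2 T) & hull T (tv3 T)].
Proof.
by split; [exists 1, 0, 0 | exists 0, 1, 0 | exists 0, 0, 1];
  split; rewrite ?ler01 ?lexx //; (lra || split; ring).
Qed.

Lemma measurable_hull {T} : Defs.nondegenerate T -> measurable (hull T).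
Proof.
move=> nT; have -> : hull T = [set x | 0 <= bary1 T x] `&`
    [set x | 0 <= bary2 T x] `&` [set x | 0 <= bary3 T x].
  apply/seteqP; split => x; first by move/(hull_bary x nT) => [].
  by move=> [[b1 b2] b3]; apply/(hull_bary x nT).
by do 2?apply: measurableI; exact: measurable_bary_ge0.
Qed.

Lemma convex_comb3_itv (l1 l2 l3 a b c : R) :
  0 <= l1 -> 0 <= l2 -> 0 <= l3 -> l1 + l2 + l3 = 1 ->
  l1 * a + l2 * b + l3 * c \in `[- (`|a| + `|b| + `|c|), `|a| + `|b| + `|c|].
Proof.
move=> l10 l20 l30 l1E; rewrite in_itv /= -ler_norml.
have le_norm l y : 0 <= l -> l <= 1 -> `|l * y| <= `|y|.
  by move=> l0 le1; rewrite normrM ger0_norm // ler_piMl.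
apply: le_trans (ler_normD _ _) _; apply: lerD; last by apply: le_norm; lra.
by apply: le_trans (ler_normD _ _) _; apply: lerD; apply: le_norm; lra.
Qed.

Lemma hull_fin_num {T} : Defs.nondegenerate T -> @leb2 R (hull T) \is a fin_num.
Proof.
move=> nT.
set K1 := `|(tv1 T).1| + `|(tv2 T).1| + `|(tv3 T).1|.
set K2 := `|(tv1 T).2| + `|(tv2 T).2| + `|(tv3 T).2|.
set box := `[- K1, K1]%classic `*` `[- K2, K2]%classic.
have hull_box : hull T `<=` box.
  move=> x [l1 [l2 [l3 [l10 l20 l30 l1E [x1 x2]]]]].
  by split => /=; [rewrite x1 | rewrite x2]; exact: convex_comb3_itv.
have mbox : measurable box by apply: measurableX; exact: measurable_itv.
have box_fin : @leb2 R box \is a fin_num.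
  rewrite /leb2 product_measure1E; try exact: measurable_itv.
  have itv_fin K : lebesgue_measure (`[- K, K]%classic : set R) \is a fin_num.
    by rewrite lebesgue_measure_itv /=; case: ifP.
  by apply: fin_numM; exact: itv_fin.
have := le_measure (@leb2 R) (mem_set (measurable_hull nT)) (mem_set mbox) hull_box.
rewrite ge0_fin_numE ?measure_ge0 // => /le_lt_trans; apply.
by rewrite ltey_eq box_fin.
Qed.

Lemma leb2_hull {T} : Defs.nondegenerate T -> @leb2 R (hull T) = (area T)%:E.
Proof. by move=> nT; rewrite /area fineK // hull_fin_num. Qed.

Lemma hull_ae_Omega {M T} : T \in M -> Defs.nondegenerate T ->
  {ae @leb2 R, forall x, hull T x -> Omega M x}.
Proof.
move=> TM nT.
set U := [set x | 0 < bary1 T x] `&` [set x | 0 < bary2 T x] `&` [set x | 0 < bary3 T x].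
have UO : U `<=` Omega M.
  rewrite /Omega -open_subsetE; last by do 2?apply: openI; exact: open_bary_gt0.
  move=> x [[b1 b2] b3]; exists T => //.
  by apply/(hull_bary x nT); split; exact: ltW.
have nT2 : det2 (tv2 T) (tv3 T) (tv1 T) != 0 by rewrite det2_rotate.
have nT3 : det2 (tv3 T) (tv1 T) (tv2 T) != 0 by rewrite 2!det2_rotate.
apply: negligibleS (negligibleU (negligibleU (negligible_bary_eq0 nT)
  (negligible_bary_eq0 nT2)) (negligible_bary_eq0 nT3)).
move=> x /not_implyP [hx nO]; have [b1 b2 b3] := (hull_bary x nT).1 hx.
apply: contrapT => nz; apply/nO/UO.
rewrite /U /= !lt0r b1 b2 b3 !andbT.
by split; [split|]; apply/eqP => b0; apply: nz; [left; left | left; right | right].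
Qed.

Lemma hull_affine_comb {T} {f : pt R -> R} {al be ga x l1 l2 l3} :
  (forall y, hull T y -> f y = al * y.1 + be * y.2 + ga) -> hull T x ->
  l1 + l2 + l3 = 1 ->
  x.1 = l1 * (tv1 T).1 + l2 * (tv2 T).1 + l3 * (tv3 T).1 ->
  x.2 = l1 * (tv1 T).2 + l2 * (tv2 T).2 + l3 * (tv3 T).2 ->
  f x = l1 * f (tv1 T) + l2 * f (tv2 T) + l3 * f (tv3 T).
Proof.
move=> fE hx l1E x1 x2; have [h1 h2 h3] := hull_tv T.
rewrite !fE // x1 x2 (_ : l1 = 1 - l2 - l3); [ring | lra].
Qed.

Lemma deltaT_ge T f : [/\ `|f (tv1 T) - f (tv2 T)| <= deltaT T f,
  `|f (tv2 T) - f (tv3 T)| <= deltaT T f & `|f (tv1 T) - f (tv3 T)| <= deltaT T f].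
Proof. by split; rewrite /deltaT !le_max lexx ?orbT. Qed.

Lemma deltaT_ge0 T f : 0 <= deltaT T f.
Proof. by have [d12 _ _] := deltaT_ge T f; exact: le_trans (normr_ge0 _) d12. Qed.

End triangles.

Section convex_combinations.
Context {R : realType}.
Variables (l1 l2 l3 : R).
Hypotheses (l10 : 0 <= l1) (l20 : 0 <= l2) (l30 : 0 <= l3) (l1E : l1 + l2 + l3 = 1).

Lemma convex_comb3_ge (y1 y2 y3 m : R) : m <= y1 -> m <= y2 -> m <= y3 ->
  m <= l1 * y1 + l2 * y2 + l3 * y3.
Proof.
move=> m1 m2 m3; rewrite -[m]mul1r -l1E !mulrDl.
by do 2?apply: lerD; exact: ler_wpM2l.
Qed.

Lemma convex_comb3_le (y1 y2 y3 m : R) : y1 <= m -> y2 <= m -> y3 <= m ->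
  l1 * y1 + l2 * y2 + l3 * y3 <= m.
Proof.
move=> m1 m2 m3; rewrite -[m]mul1r -l1E !mulrDl.
by do 2?apply: lerD; exact: ler_wpM2l.
Qed.

End convex_combinations.

Section test_function.
Context {R : realType} {M : seq (tri R)} {ED : seq (pt R * pt R)}.
Implicit Types (T : tri R) (x : pt R) (w v : pt R -> R).

Lemma test_fun_tv {w v T a} : P1 M ED w -> test_fun M ED w v -> T \in M ->
  a \in tverts T -> v a = if 0 < w a then 1 else 0.
Proof.
move=> [_ w0] [[_ v0] vE] TM aT.
(* On Gamma_D both [w] and [v] vanish, so the rule holds there as well. *)
have [aD|aD] := pselect (GammaD ED a); first by rewrite v0 // w0 // ltxx.
by rewrite vE //; split => //; exists T.
Qed.

(* If some [w_i] is positive then every [w_j >= w_i - d > -d]; otherwise all the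
   indicators vanish. *)
Lemma convex_comb3_mul_indicator_ge (l1 l2 l3 w1 w2 w3 d : R) :
  0 <= l1 -> 0 <= l2 -> 0 <= l3 -> l1 + l2 + l3 = 1 ->
  `|w1 - w2| <= d -> `|w2 - w3| <= d -> `|w1 - w3| <= d ->
  - d <= (l1 * w1 + l2 * w2 + l3 * w3) * (l1 * (if 0 < w1 then 1 else 0) +
           l2 * (if 0 < w2 then 1 else 0) + l3 * (if 0 < w3 then 1 else 0)).
Proof.
move=> l10 l20 l30 l1E; rewrite !ler_norml => /andP[? ?] /andP[? ?] /andP[? ?].
have d0 : 0 <= d by lra.
have [pos|] := boolP [|| 0 < w1, 0 < w2 | 0 < w3]; last first.
  case/norP=> /negbTE-> /norP[/negbTE-> /negbTE->].
  by rewrite !mulr0 !addr0 mulr0 oppr_le0.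
have [? ? ?] : [/\ - d <= w1, - d <= w2 & - d <= w3] by case/or3P: pos => ?; split; lra.
have ind01 (y : R) : 0 <= (if 0 < y then 1 else 0 : R) <= 1.
  by case: ifP => _; rewrite ?lexx ?ler01.
move: (ind01 w1) (ind01 w2) (ind01 w3) => /andP[? ?] /andP[? ?] /andP[? ?].
have mul_ge (s t : R) : - d <= s -> 0 <= t <= 1 -> - d <= s * t.
  by move=> ? /andP[? ?]; nra.
apply: mul_ge; first exact: convex_comb3_ge.
by apply/andP; split; [apply: convex_comb3_ge | apply: convex_comb3_le].
Qed.

Lemma test_fun_mul_ge {T w v x} : T \in M -> P1 M ED w -> test_fun M ED w v ->
  hull T x -> - deltaT T w <= w x * v x.
Proof.
move=> TM Pw vw hx.
have [al [be [ga wE]]] := Pw.1 T TM.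
have [al' [be' [ga' vE]]] := vw.1.1 T TM.
have [l1 [l2 [l3 [l10 l20 l30 l1E [x1 x2]]]]] := hx.
rewrite (hull_affine_comb wE hx l1E x1 x2) (hull_affine_comb vE hx l1E x1 x2).
rewrite !(test_fun_tv Pw vw TM) ?inE ?eqxx ?orbT //.
by have [] := deltaT_ge T w; exact: convex_comb3_mul_indicator_ge.
Qed.

End test_function.

Theorem lemma4p8 (R : realType) (M : seq (tri R)) (ED : seq (pt R * pt R))
  (tmin tmax : R) (b : pt R -> R -> R) (Beta : R)
  (w u v : pt R -> R) (z : R -> pt R -> R) (T : tri R) (ai aj ak : pt R) :
  conforming M -> connected (Omega M) -> valid_dirichlet M ED ->
  0 < tmin -> tmin <= tmax -> tmax < pi / 2 ->
  (forall T', T' \in M -> angles_in tmin tmax T') ->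
  0 <= Beta -> assumptions_b M b Beta ->
  P1 M ED w -> P1 M ED u -> (forall t, 0 <= t <= 1 -> P1 M ED (z t)) ->
  test_fun M ED w v -> in_Tc M v T ->
  perm_eq [:: ai; aj; ak] (tverts T) ->
  w aj <= w ai -> w ak <= w aj -> w ak <= 0 ->
  (\int[@leb2 R]_(x in hull T)
      \int[lebesgue_measure]_(t in `[0%R, 1%R])
         (derive1 (b x) (z t x) * w x * v x)%:E
    >= (- (deltaT T w * (7 * Beta * area T / 6)))%:E)%E.
Proof.
move=> [nondeg _] _ _ _ _ _ _ Beta0 [_ db_ae] Pw _ _ vw [TM _] _ _ _ _.
have nT := nondeg T TM.
have d0 := deltaT_ge0 T w.
have dB0 : 0 <= deltaT T w * Beta by rewrite mulr_ge0.
have inner : {ae @leb2 R, forall x, hull T x ->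
    ((- (deltaT T w * Beta))%:E <= \int[lebesgue_measure]_(t in `[0%R, 1%R])
       (derive1 (b x) (z t x) * w x * v x)%:E)%E}.
  have aeF : Filter (almost_everywhere (@leb2 R)) := ae_filter_ringOfSetsType _.
  move: (hull_ae_Omega TM nT) db_ae; apply: filterS2 => x xO db hx.
  have [_ [_ db01]] := db (xO hx).
  have wv := test_fun_mul_ge TM Pw vw hx.
  have leb01 : lebesgue_measure (`[0%R, 1%R]%classic : set R) = 1%E.
    by rewrite lebesgue_measure_itv /= lte_fin ltr01 -EFinD subr0.
  rewrite -[leLHS]mule1 -leb01 EFinN mulNe.
  apply: integral_ae_ge_cst => //; apply: aeW => t _.
  by rewrite lee_fin -mulrA; have /andP[] := db01 (z t x); nra.
have := integral_ae_ge_cst (mu := @leb2 R) (measurable_hull nT) dB0 inner.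
rewrite [X in (_ * X)%E](leb2_hull nT) -EFinM -EFinN; apply: le_trans.
have A0 : 0 <= area T by rewrite -lee_fin -(leb2_hull nT) measure_ge0.
by rewrite lee_fin lerN2; nra.
Qed.
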